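(* For every PTM $M$, the probabilistic function $CF_M:\mathbb{N}\to\mathcal D(\mathbb{N})$ defined by $CF_M(x)(y)=PT_M(x,y)=2^{-|\overline y|}$ if $y$ is a leaf of $CT_M(x)$ and $CF_M(x)(y)=0$ otherwise, satisfies $CF_M=\mu(PTC_M)$; in particular $CF_M\in\mathscr{PR}$.
   Context: PTM: Turing machine with two transition functions $\delta_0,\delta_1$ (each applied with probability $1/2$) defined on non-final configurations; initial configuration on input string $w=a\cdot v$ is $\langle\varepsilon,a,v,q_s\rangle$; final configurations are $\langle s,a,\varepsilon,q\rangle$ with $q$ final. $n\mapsto\overline n$ is the length-lexicographic bijection $\mathbb{N}\to\{0,1\}^*$ ($\overline0=\varepsilon,\overline1=0,\overline2=1,\overline3=00,\dots$). Computation tree $CT_M(x)$: nodes are binary strings, root $\varepsilon$ labelled by the initial configuration on $\overline x$, a node $b$ labelled by a non-final $C$ has children $b0,b1$ labelled $\delta_0(C),\delta_1(C)$, nodes labelled by final configurations have no children; $y\in\mathbb{N}$ denotes node $\overline y$, a leaf if it is in the tree with final label. $PT_M(x,y)=2^{-|\overline y|}$. Recursively in $y$: if $y$ is not a leaf, $PT^1_M(x,y)=1$, $PT^0_M(x,y)=0$; otherwise $PT^0_M(x,y)=PT_M(x,y)/\prod_{k<y}PT^1_M(x,k)$ and $PT^1_M(x,y)=1-PT^0_M(x,y)$. $PTC_M(x,y)(0)=PT^0_M(x,y)$, $PTC_M(x,y)(1)=PT^1_M(x,y)$, $PTC_M(x,y)(z)=0$ for $z\ge2$. Minimization: $\mu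 f(\vec x)(y)=f(\vec x,y)(0)\prod_{z<y}\sum_{k>0}f(\vec x,z)(k)$. $\mathcal D(X)$: functions $X\to[0,1]$ with sum $\le1$. $\mathscr{PR}$ is the smallest class of functions $\mathbb{N}^k\to\mathcal D(\mathbb{N})$ containing $z(n)(0)=1$, $s(n)(n+1)=1$, $\Pi^n_m(\vec k)(k_m)=1$, $r(x)(x)=r(x)(x+1)=1/2$ (other values $0$) and closed under generalized composition $(f\odot(g_1,\dots,g_n))(\vec x)(y)=\sum_{\vec z} f(\vec z)(y)\prod_i g_i(\vec x)(z_i)$, primitive recursion ($h(\vec x,0)=f(\vec x)$, $h(\vec x,y+1)(w)=\sum_z h(\vec x,y)(z)g(\vec x,y,z)(w)$) and minimization. *)

From Stdlib Require Import Reals List Arith PArith FinFun.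
Import ListNotations.
Open Scope R_scope.

Fixpoint fsum (N : nat) (F : nat -> R) : R :=
  match N with O => 0 | S n => fsum n F + F n end.

Fixpoint fprod (N : nat) (F : nat -> R) : R :=
  match N with O => 1 | S n => fprod n F * F n end.

Definition lsumR (l : list R) : R := fold_right Rplus 0 l.

(* SumN F s : s = sum_{i in N} F i  (F nonnegative: sup of partial sums) *)
Definition SumN (F : nat -> R) (s : R) : Prop :=
  is_lub (fun r => exists N, r = fsum N F) s.

Fixpoint boxes (n N : nat) : list (list nat) :=
  match n with
  | O => [[]]
  | S m => flat_map (fun i => map (cons i) (boxes m N)) (seq 0 N)
  end.

Definition SumVec (n : nat) (F : list nat -> R) (s : R) : Prop :=
  is_lub (fun r => exists N, r = lsumR (map F (boxes n N))) s.

(* Probabilistic functions N^k -> D(N), represented as                 *)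
(* list nat -> nat -> R (only arguments of length k matter).           *)

Definition pfun := list nat -> nat -> R.

Definition prodcomp (gs : list pfun) (x z : list nat) : R :=
  fold_right Rmult 1 (map (fun p => (fst p) x (snd p)) (combine gs z)).

Definition IsMu (k : nat) (f h : pfun) : Prop :=
  forall x, length x = k -> forall y,
    exists s : nat -> R,
      (forall z, SumN (fun j => f (x ++ [z]) (S j)) (s z)) /\
      h x y = f (x ++ [y]) 0%nat * fprod y s.

Inductive PR : nat -> pfun -> Prop :=
| PR_zero : forall h : pfun,
    (forall n y, h [n] y = if Nat.eqb y 0 then 1 else 0) -> PR 1 h
| PR_succ : forall h : pfun,
    (forall n y, h [n] y = if Nat.eqb y (S n) then 1 else 0) -> PR 1 h
| PR_proj : forall (n m : nat) (h : pfun), (m < n)%nat ->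
    (forall x, length x = n -> forall y,
        h x y = if Nat.eqb y (nth m x 0%nat) then 1 else 0) -> PR n h
| PR_rand : forall h : pfun,
    (forall n y, h [n] y =
        if Nat.eqb y n then / 2 else if Nat.eqb y (S n) then / 2 else 0) ->
    PR 1 h
| PR_comp : forall (k n : nat) (f : pfun) (gs : list pfun) (h : pfun),
    PR n f -> length gs = n -> (forall g, In g gs -> PR k g) ->
    (forall x, length x = k -> forall y,
        SumVec n (fun z => f z y * prodcomp gs x z) (h x y)) ->
    PR k h
| PR_rec : forall (k : nat) (f g h : pfun),
    PR k f -> PR (S (S k)) g ->
    (forall x, length x = k -> forall w, h (x ++ [0%nat]) w = f x w) ->
    (forall x, length x = k -> forall y w,
        SumN (fun z => h (x ++ [y]) z * g (x ++ [y; z]) w) (h (x ++ [S y]) w)) ->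
    PR (S k) h
| PR_mu : forall (k : nat) (f h : pfun),
    PR (S k) f -> IsMu k f h -> PR k h.

Inductive move := mL | mS | mR.

Record PTM := mkPTM {
  Q : Type;
  Sigma : Type;
  Q_fin : Finite Q;
  Sigma_fin : Finite Sigma;
  blank : Sigma;
  sym0 : Sigma;
  sym1 : Sigma;
  syms_distinct : blank <> sym0 /\ blank <> sym1 /\ sym0 <> sym1;
  qs : Q;
  final : Q -> bool;
  delta0 : Q -> Sigma -> Q * Sigma * move;
  delta1 : Q -> Sigma -> Q * Sigma * move
}.

(* configuration <s, a, v, q>; the left string s is stored REVERSED
   (its head is the cell immediately left of the tape head) *)
Record config (M : PTM) := mkConf {
  cleft : list (Sigma M);
  ccur : Sigma M;
  cright : list (Sigma M);
  cstate : Q M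
}.
Arguments mkConf {M}.
Arguments cleft {M}. Arguments ccur {M}. Arguments cright {M}. Arguments cstate {M}.

Definition isFinal {M : PTM} (C : config M) : bool :=
  final M (cstate C) && match cright C with nil => true | _ => false end.

Definition step {M : PTM} (b : bool) (C : config M) : config M :=
  let '(q', a', m) := (if b then delta1 M else delta0 M) (cstate C) (ccur C) in
  match m with
  | mS => mkConf (cleft C) a' (cright C) q'
  | mL => match cleft C with
          | nil => mkConf nil (blank M) (a' :: cright C) q'
          | c :: l => mkConf l c (a' :: cright C) q'
          end
  | mR => match cright C with
          | nil => mkConf (a' :: cleft C) (blank M) nil q'
          | c :: r => mkConf (a' :: cleft C) c r q'
          end
  end.

(* length-lexicographic bijection n |-> bar n : N -> {0,1}^*
   (false = 0, true = 1): bar n = binary digits of n+1 without leading 1 *)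
Fixpoint pbits (p : positive) : list bool :=
  match p with
  | xH => []
  | xO p' => pbits p' ++ [false]
  | xI p' => pbits p' ++ [true]
  end.
Definition bar (n : nat) : list bool := pbits (Pos.of_succ_nat n).

Definition bit2sym (M : PTM) (b : bool) : Sigma M :=
  if b then sym1 M else sym0 M.

Definition initConf (M : PTM) (w : list bool) : config M :=
  match map (bit2sym M) w with
  | nil => mkConf nil (blank M) nil (qs M)
  | a :: v => mkConf nil a v (qs M)
  end.

(* label of node b in CT_M(x), if b is a node of the tree *)
Fixpoint run {M : PTM} (C : config M) (b : list bool) : option (config M) :=
  match b with
  | nil => Some C
  | c :: b' => if isFinal C then None else run (step c C) b'
  end.

Definition label (M : PTM) (x : nat) (b : list bool) : option (config M) :=
  run (initConf M (bar x)) b.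

Definition isLeaf (M : PTM) (x y : nat) : bool :=
  match label M x (bar y) with
  | Some C => isFinal C
  | None => false
  end.

Definition PT (M : PTM) (x y : nat) : R := / (2 ^ length (bar y)).

Definition PT0_from (M : PTM) (x y : nat) (P : R) : R :=
  if isLeaf M x y then PT M x y / P else 0.
Definition PT1_from (M : PTM) (x y : nat) (P : R) : R :=
  if isLeaf M x y then 1 - PT M x y / P else 1.

(* P1prod M x n = prod_{k<n} PT^1_M(x,k) *)
Fixpoint P1prod (M : PTM) (x n : nat) : R :=
  match n with
  | O => 1
  | S n' => P1prod M x n' * PT1_from M x n' (P1prod M x n')
  end.

Definition PT0 (M : PTM) (x y : nat) : R := PT0_from M x y (P1prod M x y).
Definition PT1 (M : PTM) (x y : nat) : R := PT1_from M x y (P1prod M x y).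

Definition PTC (M : PTM) : pfun := fun args z =>
  let x := nth 0 args 0%nat in
  let y := nth 1 args 0%nat in
  match z with
  | O => PT0 M x y
  | 1%nat => PT1 M x y
  | _ => 0
  end.

Definition CF (M : PTM) : pfun := fun args y =>
  let x := nth 0 args 0%nat in
  if isLeaf M x y then PT M x y else 0.

(* The identity CF_M = mu(PTC_M) telescopes.  The running product
   prod_{k<y} PT^1_M(x,k) is 1 minus the weight of the leaves k < y, and by
   Kraft's inequality for the prefix-free set of leaves it is at least
   PT_M(x,y) when y is a leaf; so PT^0_M(x,y) lies in [0,1] and multiplied by
   the running product gives back PT_M(x,y).

   Scaled by 2^|bar y| the running
   product becomes an integer q, computed primitive recursively by running M
   on arithmetically coded configurations, and PT^0_M(x,y) = 1/q.  Drawing a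
   geometric k (the first head of a fair coin, a minimization of r) and
   reading the (k+1)-th binary digit of 1/q yields 0 with probability exactly
   1/q. *)

From Stdlib Require Import Reals List.
From Stdlib Require Import Arith Lia Lra PArith FinFun ClassicalEpsilon.
Import ListNotations.

Open Scope R_scope.

(** * Sums of nonnegative series *)

Lemma fsum_ext N F G : (forall i, F i = G i) -> fsum N F = fsum N G.
Proof. intros H. induction N; simpl; auto. rewrite IHN, H. auto. Qed.

Lemma fsum_zero N F : (forall i, F i = 0) -> fsum N F = 0.
Proof. intros H. induction N; simpl; auto. rewrite IHN, H. lra. Qed.

Lemma fsum_minus N F G : fsum N (fun k => F k - G k) = fsum N F - fsum N G.
Proof. induction N; simpl. lra. rewrite IHN. lra. Qed.

Lemma fsum_single F j0 N :
  (forall j, j <> j0 -> F j = 0) -> fsum N F = if (j0 <? N)%nat then F j0 else 0.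
Proof.
  intros H. induction N; simpl; auto.
  rewrite IHN. destruct (Nat.eq_dec N j0) as [->|Hne].
  - rewrite (proj2 (Nat.ltb_ge j0 j0)), (proj2 (Nat.ltb_lt j0 (S j0))) by lia. lra.
  - rewrite (H N Hne).
    destruct (j0 <? N)%nat eqn:E1; destruct (j0 <? S N)%nat eqn:E2;
      rewrite ?Nat.ltb_lt, ?Nat.ltb_ge in *; try lia; lra.
Qed.

Lemma fsum_le_mono F m n :
  (forall i, 0 <= F i) -> (m <= n)%nat -> fsum m F <= fsum n F.
Proof.
  intros HF Hmn. induction Hmn; [lra|]. simpl. specialize (HF m0). lra.
Qed.

Lemma geometric_fsum N : fsum N (fun k => (/ 2) ^ S k) = 1 - (/ 2) ^ N.
Proof. induction N; simpl in *; lra. Qed.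

Lemma fprod_const y c : fprod y (fun _ => c) = c ^ y.
Proof. induction y; simpl; auto. rewrite IHy. ring. Qed.

Lemma is_lub_approx (a : nat -> R) L :
  (forall N, a N <= L) -> (forall eps, eps > 0 -> exists N, L - eps < a N) ->
  is_lub (fun r => exists N, r = a N) L.
Proof.
  intros Hub Happrox. split.
  - intros r [N ->]. auto.
  - intros u Hu. destruct (Rle_or_lt L u) as [|Hlt]; auto.
    destruct (Happrox (L - u)) as [N HN]; [lra|].
    assert (a N <= u) by (apply Hu; eauto). lra.
Qed.

Lemma is_lub_gated (a b : nat -> R) (c : nat -> bool) N0 L :
  (forall m n, (m <= n)%nat -> a m <= a n) -> 0 <= a 0%nat ->
  (forall N, (N0 <= N)%nat -> c N = true) ->
  (forall N, b N = if c N then a N else 0) ->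
  is_lub (fun r => exists N, r = a N) L -> is_lub (fun r => exists N, r = b N) L.
Proof.
  intros Hmono H0 Hc Hb [Hub Hleast]. split.
  - intros r [N ->]. rewrite Hb. destruct (c N).
    + apply Hub; eauto.
    + apply Rle_trans with (a 0%nat); auto. apply Hub; eauto.
  - intros u Hu. apply Hleast. intros r [N ->].
    apply Rle_trans with (a (Nat.max N N0)); [apply Hmono; lia|].
    apply Hu. exists (Nat.max N N0). rewrite Hb, Hc by lia. auto.
Qed.

Lemma is_lub_const v : is_lub (fun r => exists N : nat, r = v) v.
Proof. split; [intros r [_ ->]; lra | intros u Hu; apply Hu; exists 0%nat; auto]. Qed.

Lemma SumN_ext F G L : (forall i, F i = G i) -> SumN F L -> SumN G L.
Proof.
  intros H [Hub Hleast]. split.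
  - intros r [N ->]. rewrite <- (fsum_ext N F G H). apply Hub; eauto.
  - intros u Hu. apply Hleast. intros r [N ->]. rewrite (fsum_ext N F G H). apply Hu; eauto.
Qed.

Lemma SumN_single F j0 : (forall j, j <> j0 -> F j = 0) -> 0 <= F j0 -> SumN F (F j0).
Proof.
  intros H Hpos. apply (is_lub_gated (fun _ => F j0) _ (fun N => j0 <? N)%nat (S j0));
    auto using is_lub_const.
  - intros; lra.
  - intros N HN. apply Nat.ltb_lt. lia.
  - intros N. apply fsum_single; auto.
Qed.

Lemma SumN_squeeze F L :
  (forall N, fsum N F <= L) -> (forall N, L - (/ 2) ^ N <= fsum N F) -> SumN F L.
Proof.
  intros Hub Hlb. apply is_lub_approx; auto.
  intros eps Heps. destruct (pow_lt_1_zero (/ 2) ltac:(rewrite Rabs_pos_eq; lra) eps Heps)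
    as [N HN].
  exists N. specialize (HN N (le_n N)). rewrite Rabs_pos_eq in HN by (apply pow_le; lra).
  specialize (Hlb N). lra.
Qed.
(** * Closure properties of [PR] *)

Lemma PR_ext k h h' :
  PR k h -> (forall x, length x = k -> forall y, h x y = h' x y) -> PR k h'.
Proof.
  intros HP Heq. destruct HP.
  - apply PR_zero; intros; rewrite <- Heq by reflexivity; auto.
  - apply PR_succ; intros; rewrite <- Heq by reflexivity; auto.
  - eapply PR_proj; eauto; intros; rewrite <- Heq by auto; auto.
  - apply PR_rand; intros; rewrite <- Heq by reflexivity; auto.
  - eapply PR_comp; eauto; intros; rewrite <- Heq by auto; auto.
  - assert (Hlen : forall (x : list nat) y, length x = k -> length (x ++ [y]) = S k)
      by (intros; rewrite length_app; simpl; lia).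
    eapply PR_rec; eauto.
    + intros; rewrite <- Heq by auto; auto.
    + intros x Hx y w. rewrite <- (Heq (x ++ [S y])) by auto.
      eapply SumN_ext; [|eauto]. intros z. simpl. rewrite Heq by auto. auto.
  - match goal with Hmu : IsMu _ _ _ |- _ => apply (PR_mu _ _ _ HP); intros x Hx y;
      destruct (Hmu x Hx y) as [s [Hs Hh]] end.
    exists s. rewrite <- Heq; auto.
Qed.

Definition dirac (F : list nat -> nat) : pfun :=
  fun l y => if Nat.eqb y (F l) then 1 else 0.

Definition PRdet k F := PR k (dirac F).

Lemma dirac_nonneg F l y : 0 <= dirac F l y.
Proof. unfold dirac; destruct (Nat.eqb y (F l)); lra. Qed.

Lemma PRdet_ext k F F' : PRdet k F -> (forall x, length x = k -> F x = F' x) -> PRdet k F'.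
Proof. intros H E. eapply PR_ext; eauto. intros x Hx y. unfold dirac. rewrite E; auto. Qed.

Notation "l @ i" := (nth i l 0%nat) (at level 1, format "l @ i").

Lemma lsumR_app l1 l2 : lsumR (l1 ++ l2) = lsumR l1 + lsumR l2.
Proof. induction l1; unfold lsumR in *; simpl; [lra|]. rewrite IHl1. lra. Qed.

Lemma lsumR_scal {A} c (G : A -> R) l : lsumR (map (fun z => c * G z) l) = c * lsumR (map G l).
Proof. induction l; unfold lsumR in *; simpl; [lra|]. rewrite IHl. lra. Qed.

Lemma lsumR_boxes_S (F : list nat -> R) n N :
  lsumR (map F (boxes (S n) N)) =
  fsum N (fun i => lsumR (map (fun z => F (i :: z)) (boxes n N))).
Proof.
  simpl. generalize (boxes n N) as L. intros L. induction N; [reflexivity|].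
  rewrite seq_S, flat_map_app, map_app, lsumR_app, IHN. simpl.
  rewrite app_nil_r, map_map. auto.
Qed.

Lemma prodcomp_cons g gs x i z : prodcomp (g :: gs) x (i :: z) = g x i * prodcomp gs x z.
Proof. reflexivity. Qed.

Lemma lsumR_boxes_dirac (f : list nat -> R) Hs x N :
  lsumR (map (fun z => f z * prodcomp (map dirac Hs) x z) (boxes (length Hs) N)) =
  if forallb (fun h => Nat.ltb h N) (map (fun H => H x) Hs)
  then f (map (fun H => H x) Hs) else 0.
Proof.
  revert f. induction Hs as [|H Hs IH]; intros f.
  - unfold lsumR, prodcomp; simpl. lra.
  - change (length (H :: Hs)) with (S (length Hs)).
    change (map dirac (H :: Hs)) with (dirac H :: map dirac Hs).
    rewrite lsumR_boxes_S.
    rewrite (fsum_ext _ _ (fun i => dirac H x i *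
        (if forallb (fun h => h <? N)%nat (map (fun H => H x) Hs)
         then f (i :: map (fun H => H x) Hs) else 0))).
    2:{ intros i. rewrite <- (IH (fun z => f (i :: z))), <- lsumR_scal.
        f_equal. apply map_ext. intros z. rewrite prodcomp_cons. ring. }
    rewrite (fsum_single _ (H x)).
    + unfold dirac. rewrite Nat.eqb_refl.
      simpl. destruct (H x <? N)%nat, (forallb _ _); simpl; lra.
    + intros j Hj. unfold dirac. rewrite (proj2 (Nat.eqb_neq j (H x)) Hj). lra.
Qed.

Lemma forallb_lt_eventually (hv : list nat) :
  exists N0, forall N, (N0 <= N)%nat -> forallb (fun h => Nat.ltb h N) hv = true.
Proof.
  induction hv as [|a hv [N0 HN0]]; [exists 0%nat; auto|].
  exists (Nat.max N0 (S a)). intros N HN. simpl.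
  rewrite HN0, (proj2 (Nat.ltb_lt _ _)) by lia. auto.
Qed.

Lemma PR_comp_det k f Hs :
  PR (length Hs) f -> (forall z y, 0 <= f z y) -> (forall H, In H Hs -> PRdet k H) ->
  PR k (fun x y => f (map (fun H => H x) Hs) y).
Proof.
  intros Hf Hpos HH. apply (PR_comp k (length Hs) f (map dirac Hs)); auto.
  - apply length_map.
  - intros g Hg. apply in_map_iff in Hg as [H [<- HH']]. apply HH; auto.
  - intros x Hx y. destruct (forallb_lt_eventually (map (fun H => H x) Hs)) as [N0 HN0].
    apply (is_lub_gated (fun _ => f (map (fun H => H x) Hs) y) _
      (fun N => forallb (fun h => Nat.ltb h N) (map (fun H => H x) Hs)) N0);
      auto using is_lub_const.
    + intros; lra.
    + intros N. apply (lsumR_boxes_dirac (fun z => f z y)).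
Qed.

Lemma PRdet_comp k n G Hs :
  PRdet n G -> (forall H, In H Hs -> PRdet k H) -> length Hs = n ->
  PRdet k (fun x => G (map (fun H => H x) Hs)).
Proof.
  intros HG HH <-. eapply PR_ext.
  - apply (PR_comp_det k (dirac G) Hs); auto using dirac_nonneg.
  - reflexivity.
Qed.

Lemma PRdet_rec k F G H :
  PRdet k F -> PRdet (S (S k)) G ->
  (forall x, length x = k -> H (x ++ [0%nat]) = F x) ->
  (forall x y, length x = k -> H (x ++ [S y]) = G (x ++ [y; H (x ++ [y])])) ->
  PRdet (S k) H.
Proof.
  intros HF HG E0 ES. apply (PR_rec k (dirac F) (dirac G) (dirac H)); auto.
  - intros x Hx w. unfold dirac. rewrite E0; auto.
  - intros x Hx y w. set (z0 := H (x ++ [y])).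
    replace (dirac H (x ++ [S y]) w) with (dirac H (x ++ [y]) z0 * dirac G (x ++ [y; z0]) w)
      by (unfold dirac; rewrite ES by auto; fold z0; rewrite Nat.eqb_refl; lra).
    apply (SumN_single (fun z => dirac H (x ++ [y]) z * dirac G (x ++ [y; z]) w)).
    + intros j Hj. unfold dirac at 1. fold z0. rewrite (proj2 (Nat.eqb_neq j z0) Hj). lra.
    + apply Rmult_le_pos; apply dirac_nonneg.
Qed.

Definition projections k : list (list nat -> nat) := map (fun i l => l@i) (seq 0 k).

Lemma projections_length k : length (projections k) = k.
Proof. unfold projections. rewrite length_map, length_seq. auto. Qed.

Lemma map_projections x : map (fun H => H x) (projections (length x)) = x.
Proof.
  unfold projections. rewrite map_map.
  apply nth_ext with (d := 0%nat) (d' := 0%nat); rewrite length_map, length_seq; auto.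
  intros i Hi. rewrite nth_indep with (d' := x@0) by (rewrite length_map, length_seq; auto).
  rewrite (map_nth (fun j => x@j) _ 0%nat), seq_nth; auto.
Qed.

Lemma PRdet_proj k i : (i < k)%nat -> PRdet k (fun l => l@i).
Proof. intros. eapply PR_proj; eauto. Qed.

Lemma PR_bind k g F h :
  PR k g -> (forall x z, 0 <= g x z) -> PRdet (S k) F ->
  (forall x, length x = k -> forall y, SumN (fun z => g x z * dirac F (z :: x) y) (h x y)) ->
  PR k h.
Proof.
  intros Hg Hgpos HF Hh.
  apply (PR_comp k (S k) (dirac F) (g :: map dirac (projections k)) h HF).
  - simpl. rewrite length_map, projections_length. auto.
  - intros g' [<-|Hin]; auto.
    apply in_map_iff in Hin as [H [<- Hin]]. unfold projections in Hin.
    apply in_map_iff in Hin as [i [<- Hi]]. apply in_seq in Hi. apply PRdet_proj. lia.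
  - intros x Hx y. subst k.
    destruct (forallb_lt_eventually x) as [N0 HN0].
    apply (is_lub_gated (fun N => fsum N (fun z => g x z * dirac F (z :: x) y)) _
      (fun N => forallb (fun h => Nat.ltb h N) x) N0); auto.
    + intros m n Hmn. apply fsum_le_mono; auto.
      intros i. apply Rmult_le_pos; auto using dirac_nonneg.
    + simpl; lra.
    + intros N. rewrite lsumR_boxes_S.
      rewrite (fsum_ext _ _ (fun i => if forallb (fun h => Nat.ltb h N) x
                                      then g x i * dirac F (i :: x) y else 0)).
      { destruct (forallb _ x); auto using fsum_zero. }
      intros i.
      pose proof (lsumR_boxes_dirac (fun z => g x i * dirac F (i :: z) y)
                    (projections (length x)) x N) as E.
      rewrite projections_length, map_projections in E. rewrite <- E.
      f_equal. apply map_ext. intros z. rewrite prodcomp_cons. ring.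
    + apply Hh. auto.
Qed.

(** * Primitive recursive arithmetic *)

Open Scope nat_scope.

Lemma PRdet_comp1 k f h : PRdet 1 (fun l => f (l@0)) -> PRdet k h -> PRdet k (fun x => f (h x)).
Proof.
  intros Hf Hh. eapply PRdet_ext; [apply (PRdet_comp k 1 _ [h] Hf)|]; auto.
  intros H [<-|[]]; auto.
Qed.

Lemma PRdet_comp2 k f h1 h2 :
  PRdet 2 (fun l => f (l@0) (l@1)) -> PRdet k h1 -> PRdet k h2 ->
  PRdet k (fun x => f (h1 x) (h2 x)).
Proof.
  intros Hf H1 H2. eapply PRdet_ext; [apply (PRdet_comp k 2 _ [h1; h2] Hf)|]; auto.
  intros H [<-|[<-|[]]]; auto.
Qed.

Lemma PRdet_comp3 k f h1 h2 h3 :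
  PRdet 3 (fun l => f (l@0) (l@1) (l@2)) -> PRdet k h1 -> PRdet k h2 -> PRdet k h3 ->
  PRdet k (fun x => f (h1 x) (h2 x) (h3 x)).
Proof.
  intros Hf H1 H2 H3. eapply PRdet_ext; [apply (PRdet_comp k 3 _ [h1; h2; h3] Hf)|]; auto.
  intros H [<-|[<-|[<-|[]]]]; auto.
Qed.

Lemma PRdet_S k h : PRdet k h -> PRdet k (fun x => S (h x)).
Proof. apply (PRdet_comp1 k S). apply PR_succ. reflexivity. Qed.

Lemma PRdet_const k c : 0 < k -> PRdet k (fun _ => c).
Proof.
  intros Hk. induction c; [|apply (PRdet_S k (fun _ => c)); auto].
  apply (PRdet_comp1 k (fun _ => 0) (fun l => l@0)).
  - apply PR_zero. reflexivity.
  - apply PRdet_proj. auto.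
Qed.

Lemma PRdet_rec2 (f : nat -> nat -> nat) base step :
  PRdet 1 (fun l => base (l@0)) -> PRdet 3 (fun l => step (l@0) (l@1) (l@2)) ->
  (forall a, f a 0 = base a) -> (forall a n, f a (S n) = step a n (f a n)) ->
  PRdet 2 (fun l => f (l@0) (l@1)).
Proof.
  intros Hb Hs E0 ES. apply (PRdet_rec 1 _ _ _ Hb Hs).
  - intros [|a [|]] Hx; try discriminate. apply E0.
  - intros [|a [|]] y Hx; try discriminate. apply ES.
Qed.

Lemma PRdet_rec3 (f : nat -> nat -> nat -> nat) base step :
  PRdet 2 (fun l => base (l@0) (l@1)) -> PRdet 4 (fun l => step (l@0) (l@1) (l@2) (l@3)) ->
  (forall a b, f a b 0 = base a b) -> (forall a b n, f a b (S n) = step a b n (f a b n)) ->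
  PRdet 3 (fun l => f (l@0) (l@1) (l@2)).
Proof.
  intros Hb Hs E0 ES. apply (PRdet_rec 2 _ _ _ Hb Hs).
  - intros [|a [|b [|]]] Hx; try discriminate. apply E0.
  - intros [|a [|b [|]]] y Hx; try discriminate. apply ES.
Qed.

(* Unary functions are lifted through a dummy first argument, since
   primitive recursion needs at least one parameter. *)
Lemma PRdet_unary (f : nat -> nat) base step :
  PRdet 1 (fun l => base (l@0)) -> PRdet 3 (fun l => step (l@0) (l@1) (l@2)) ->
  (forall a, f 0 = base a) -> (forall a n, f (S n) = step a n (f n)) ->
  forall k h, PRdet k h -> PRdet k (fun x => f (h x)).
Proof.
  intros Hb Hs E0 ES k h Hh.
  apply (PRdet_comp2 k (fun _ n => f n) h h); auto.
  apply (PRdet_rec2 (fun _ n => f n) base step); auto.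
Qed.

Definition ifz (a b c : nat) : nat := match c with O => a | S _ => b end.

Lemma PRdet_add k h1 h2 : PRdet k h1 -> PRdet k h2 -> PRdet k (fun x => h1 x + h2 x).
Proof.
  apply (PRdet_comp2 k Nat.add).
  apply (PRdet_rec2 Nat.add (fun a => a) (fun _ _ acc => S acc)); intros; try lia.
  - apply PRdet_proj; lia.
  - apply PRdet_S, PRdet_proj; lia.
Qed.

Lemma PRdet_mul k h1 h2 : PRdet k h1 -> PRdet k h2 -> PRdet k (fun x => h1 x * h2 x).
Proof.
  apply (PRdet_comp2 k Nat.mul).
  apply (PRdet_rec2 Nat.mul (fun _ => 0) (fun a _ acc => acc + a)); intros; try lia.
  - apply PRdet_const; lia.
  - apply PRdet_add; apply PRdet_proj; lia.
Qed.

Lemma PRdet_pred k h : PRdet k h -> PRdet k (fun x => Nat.pred (h x)).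
Proof.
  apply (PRdet_unary Nat.pred (fun _ => 0) (fun _ n _ => n)); auto.
  - apply PRdet_const; lia.
  - apply PRdet_proj; lia.
Qed.

Lemma PRdet_sub k h1 h2 : PRdet k h1 -> PRdet k h2 -> PRdet k (fun x => h1 x - h2 x).
Proof.
  apply (PRdet_comp2 k Nat.sub).
  apply (PRdet_rec2 Nat.sub (fun a => a) (fun _ _ acc => Nat.pred acc)); intros; try lia.
  - apply PRdet_proj; lia.
  - apply PRdet_pred, PRdet_proj; lia.
Qed.

Lemma PRdet_ifz k h1 h2 h3 :
  PRdet k h1 -> PRdet k h2 -> PRdet k h3 -> PRdet k (fun x => ifz (h1 x) (h2 x) (h3 x)).
Proof.
  apply (PRdet_comp3 k ifz).
  apply (PRdet_rec3 ifz (fun a _ => a) (fun _ b _ _ => b)); auto; apply PRdet_proj; lia.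
Qed.

Lemma PRdet_pow k h1 h2 : PRdet k h1 -> PRdet k h2 -> PRdet k (fun x => h1 x ^ h2 x).
Proof.
  apply (PRdet_comp2 k Nat.pow).
  apply (PRdet_rec2 Nat.pow (fun _ => 1) (fun a _ acc => a * acc)); auto.
  - apply PRdet_const; lia.
  - apply PRdet_mul; apply PRdet_proj; lia.
Qed.

Ltac prdet_arith := first
  [ apply PRdet_const; lia | apply PRdet_proj; lia | apply PRdet_S | apply PRdet_add
  | apply PRdet_mul | apply PRdet_pred | apply PRdet_sub | apply PRdet_ifz | apply PRdet_pow ].

Definition diffn (a b : nat) : nat := (a - b) + (b - a).

Fixpoint modr (d n : nat) : nat :=
  match n with O => O | S n' => ifz 0 (S (modr d n')) (diffn d (S (modr d n'))) end.
Fixpoint divr (d n : nat) : nat :=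
  match n with O => O | S n' => ifz (S (divr d n')) (divr d n') (diffn d (S (modr d n'))) end.

Lemma divr_modr_pos d n : 0 < d -> n = d * divr d n + modr d n /\ modr d n < d.
Proof.
  intros Hd. induction n as [|n [E L]]; simpl; [lia|].
  unfold ifz, diffn. destruct (d - S (modr d n) + (S (modr d n) - d)) eqn:Ed; lia.
Qed.

Lemma modr_mod d n : modr d n = n mod d.
Proof.
  destruct d as [|d'].
  - rewrite Nat.mod_0_r. induction n; simpl; auto.
  - destruct (divr_modr_pos (S d') n ltac:(lia)) as [E L].
    apply (Nat.mod_unique n (S d') (divr (S d') n)); lia.
Qed.

Lemma divr_div d n : divr d n = n / d.
Proof.
  destruct d as [|d'].
  - rewrite Nat.div_0_r. induction n; simpl; auto.
  - destruct (divr_modr_pos (S d') n ltac:(lia)) as [E L].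
    apply (Nat.div_unique n (S d') (divr (S d') n) (modr (S d') n)); lia.
Qed.

Lemma PRdet_mod k h1 h2 : PRdet k h1 -> PRdet k h2 -> PRdet k (fun x => h1 x mod h2 x).
Proof.
  intros H1 H2. eapply PRdet_ext; [apply (PRdet_comp2 k modr h2 h1); auto|].
  - apply (PRdet_rec2 modr (fun _ => 0) (fun d _ acc => ifz 0 (S acc) (diffn d (S acc))));
      unfold diffn; auto; repeat prdet_arith.
  - intros. apply modr_mod.
Qed.

Lemma PRdet_div k h1 h2 : PRdet k h1 -> PRdet k h2 -> PRdet k (fun x => h1 x / h2 x).
Proof.
  intros H1 H2. eapply PRdet_ext; [apply (PRdet_comp2 k divr h2 h1); auto|].
  - apply (PRdet_rec2 divr (fun _ => 0)
      (fun d n acc => ifz (S acc) acc (diffn d (S (n mod d))))); unfold diffn; auto.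
    + apply PRdet_const; lia.
    + repeat (first [apply PRdet_mod | prdet_arith]).
    + intros. simpl. rewrite modr_mod. auto.
  - intros. apply divr_div.
Qed.

Lemma log2_S n : Nat.log2 (S n) = ifz (S (Nat.log2 n)) (Nat.log2 n) (2 ^ S (Nat.log2 n) - S n).
Proof.
  destruct (Nat.log2_succ_or n) as [E|E]; unfold ifz.
  - pose proof (Nat.log2_spec (S n) ltac:(lia)). rewrite E in H.
    destruct (2 ^ S (Nat.log2 n) - S n) eqn:X; auto. lia.
  - destruct n; [reflexivity|].
    pose proof (Nat.log2_spec (S (S n)) ltac:(lia)). rewrite E in H.
    destruct (2 ^ S (Nat.log2 (S n)) - S (S n)) eqn:X; auto. simpl in X, H. lia.
Qed.

Lemma PRdet_log2 k h : PRdet k h -> PRdet k (fun x => Nat.log2 (h x)).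
Proof.
  apply (PRdet_unary Nat.log2 (fun _ => 0) (fun _ n acc => ifz (S acc) acc (2 ^ S acc - S n)));
    auto using log2_S; repeat prdet_arith.
Qed.

Lemma PRdet_nth k l h : 0 < k -> PRdet k h -> PRdet k (fun x => nth (h x) l 0).
Proof.
  intros Hk. revert h. induction l as [|v l IH]; intros h Hh.
  - eapply PRdet_ext; [apply (PRdet_const k 0); auto|]. intros x _. destruct (h x); auto.
  - eapply PRdet_ext; [apply (PRdet_ifz k (fun _ => v) (fun x => nth (Nat.pred (h x)) l 0) h)|].
    + apply PRdet_const; auto.
    + apply IH, PRdet_pred; auto.
    + auto.
    + intros x _. unfold ifz. destruct (h x); reflexivity.
Qed.

Fixpoint tri (s : nat) : nat := match s with O => O | S s' => tri s' + S s' end.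
Fixpoint diag (n : nat) : nat :=
  match n with O => O | S n' => ifz (S (diag n')) (diag n') (tri (S (diag n')) - S n') end.

Lemma PRdet_tri k h : PRdet k h -> PRdet k (fun x => tri (h x)).
Proof. apply (PRdet_unary tri (fun _ => 0) (fun _ n acc => acc + S n)); auto; repeat prdet_arith. Qed.

Lemma PRdet_diag k h : PRdet k h -> PRdet k (fun x => diag (h x)).
Proof.
  apply (PRdet_unary diag (fun _ => 0) (fun _ n acc => ifz (S acc) acc (tri (S acc) - S n)));
    auto; repeat (first [apply PRdet_tri | prdet_arith]).
Qed.

Lemma tri_le_mono a b : a <= b -> tri a <= tri b.
Proof. induction 1; simpl; lia. Qed.

Lemma diag_spec n : tri (diag n) <= n < tri (S (diag n)).
Proof.
  induction n; [simpl; lia|]. cbn [diag]. unfold ifz.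
  destruct (tri (S (diag n)) - S n) eqn:E; cbn [tri] in *; lia.
Qed.

Lemma diag_unique s n : tri s <= n < tri (S s) -> diag n = s.
Proof.
  intros H. pose proof (diag_spec n).
  destruct (Nat.lt_trichotomy (diag n) s) as [L|[E|L]]; auto.
  - pose proof (tri_le_mono (S (diag n)) s L). lia.
  - pose proof (tri_le_mono (S s) (diag n) L). lia.
Qed.

Definition pairn (a b : nat) : nat := tri (a + b) + b.
Definition fstn (n : nat) : nat := diag n - (n - tri (diag n)).
Definition sndn (n : nat) : nat := n - tri (diag n).

Lemma diag_pairn a b : diag (pairn a b) = a + b.
Proof. apply diag_unique. unfold pairn. simpl. lia. Qed.
Lemma fstn_pairn a b : fstn (pairn a b) = a.
Proof. unfold fstn. rewrite diag_pairn. unfold pairn. lia. Qed.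
Lemma sndn_pairn a b : sndn (pairn a b) = b.
Proof. unfold sndn. rewrite diag_pairn. unfold pairn. lia. Qed.

Ltac prdet_step := first
  [ apply PRdet_nth; [lia|] | apply PRdet_mod | apply PRdet_div | apply PRdet_log2
  | apply PRdet_tri | apply PRdet_diag | prdet_arith ].
Ltac prdet := repeat prdet_step.

Lemma PRdet_pairn k h1 h2 : PRdet k h1 -> PRdet k h2 -> PRdet k (fun x => pairn (h1 x) (h2 x)).
Proof. intros. unfold pairn. prdet; auto. Qed.
Lemma PRdet_fstn k h : PRdet k h -> PRdet k (fun x => fstn (h x)).
Proof. intros. unfold fstn. prdet; auto. Qed.
Lemma PRdet_sndn k h : PRdet k h -> PRdet k (fun x => sndn (h x)).
Proof. intros. unfold sndn. prdet; auto. Qed.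

Close Scope nat_scope.

(** * Arithmetization of a PTM *)

Open Scope nat_scope.

Lemma div_mod_digits a b n : b < n -> (a * n + b) mod n = b /\ (a * n + b) / n = a.
Proof.
  intros H. split.
  - symmetry. apply (Nat.mod_unique _ _ a); lia.
  - symmetry. apply (Nat.div_unique _ _ _ b); lia.
Qed.

Lemma nth_map_seq (f : nat -> nat) K j : j < K -> nth j (map f (seq 0 K)) 0 = f j.
Proof.
  intros H. rewrite nth_indep with (d' := f 0) by (rewrite length_map, length_seq; auto).
  rewrite map_nth, seq_nth by auto. auto.
Qed.

Lemma pbits_length p : length (pbits p) = Nat.log2 (Pos.to_nat p).
Proof.
  induction p; simpl pbits.
  - rewrite length_app, IHp, Pos2Nat.inj_xI.
    replace (S (2 * Pos.to_nat p)) with (2 * Pos.to_nat p + 1) by lia.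
    rewrite Nat.log2_succ_double by lia. simpl. lia.
  - rewrite length_app, IHp, Pos2Nat.inj_xO, Nat.log2_double by lia. simpl. lia.
  - auto.
Qed.

Lemma pbits_nth p t : t < length (pbits p) ->
  nth t (pbits p) false = Nat.testbit (Pos.to_nat p) (length (pbits p) - 1 - t).
Proof.
  revert t; induction p; intros t Ht; simpl pbits in *;
    rewrite ?length_app in *; simpl length in *; [| |simpl in Ht; lia].
  - rewrite Pos2Nat.inj_xI. replace (S (2 * Pos.to_nat p)) with (2 * Pos.to_nat p + 1) by lia.
    destruct (Nat.eq_dec t (length (pbits p))) as [->|Hne].
    + rewrite app_nth2, Nat.sub_diag by lia.
      replace (length (pbits p) + 1 - 1 - length (pbits p)) with 0 by lia.
      rewrite Nat.testbit_odd_0. auto.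
    + rewrite app_nth1, IHp by lia.
      replace (length (pbits p) + 1 - 1 - t) with (S (length (pbits p) - 1 - t)) by lia.
      rewrite Nat.testbit_odd_succ by lia. auto.
  - rewrite Pos2Nat.inj_xO.
    destruct (Nat.eq_dec t (length (pbits p))) as [->|Hne].
    + rewrite app_nth2, Nat.sub_diag by lia.
      replace (length (pbits p) + 1 - 1 - length (pbits p)) with 0 by lia.
      rewrite Nat.testbit_even_0. auto.
    + rewrite app_nth1, IHp by lia.
      replace (length (pbits p) + 1 - 1 - t) with (S (length (pbits p) - 1 - t)) by lia.
      rewrite Nat.testbit_even_succ by lia. auto.
Qed.

Lemma bar_length n : length (bar n) = Nat.log2 (S n).
Proof. unfold bar. rewrite pbits_length, SuccNat2Pos.id_succ. auto. Qed.

Lemma bar_nth n t : t < length (bar n) ->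
  nth t (bar n) false = Nat.testbit (S n) (Nat.log2 (S n) - 1 - t).
Proof.
  intros H. unfold bar in *. rewrite pbits_nth, pbits_length, SuccNat2Pos.id_succ; auto.
Qed.

Lemma pbits_inj p q : pbits p = pbits q -> p = q.
Proof.
  revert q; induction p; destruct q; simpl; intros H; auto;
   try (apply app_inj_tail in H as [H1 H2]; try discriminate; f_equal; auto);
   try (symmetry in H; apply app_cons_not_nil in H; destruct H);
   try (apply app_cons_not_nil in H; destruct H).
Qed.

Lemma bar_inj : Injective bar.
Proof. intros n m H. apply SuccNat2Pos.inj, pbits_inj, H. Qed.

Section Coding.
Variable M : PTM.

Definition states : list (Q M) :=
  proj1_sig (constructive_indefinite_description _ (Q_fin M)).
Definition symbols : list (Sigma M) :=
  proj1_sig (constructive_indefinite_description _ (Sigma_fin M)).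

Lemma In_states q : In q states.
Proof. unfold states. destruct (constructive_indefinite_description _ _). apply f. Qed.
Lemma In_symbols s : In s symbols.
Proof. unfold symbols. destruct (constructive_indefinite_description _ _). apply f. Qed.

Definition qcode (q : Q M) : nat :=
  proj1_sig (constructive_indefinite_description _ (In_nth_error _ _ (In_states q))).
Definition scode (s : Sigma M) : nat :=
  proj1_sig (constructive_indefinite_description _ (In_nth_error _ _ (In_symbols s))).

Lemma nth_error_qcode q : nth_error states (qcode q) = Some q.
Proof. unfold qcode. destruct (constructive_indefinite_description _ _). auto. Qed.
Lemma nth_error_scode s : nth_error symbols (scode s) = Some s.
Proof. unfold scode. destruct (constructive_indefinite_description _ _). auto. Qed.

Definition nQ := length states.
Definition nS := length symbols.

Lemma qcode_lt q : qcode q < nQ.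
Proof. apply nth_error_Some. rewrite nth_error_qcode. discriminate. Qed.
Lemma scode_lt s : scode s < nS.
Proof. apply nth_error_Some. rewrite nth_error_scode. discriminate. Qed.

Definition qdecode i := nth i states (qs M).
Definition sdecode i := nth i symbols (blank M).

Lemma qdecode_qcode q : qdecode (qcode q) = q.
Proof. apply nth_error_nth, nth_error_qcode. Qed.
Lemma sdecode_scode s : sdecode (scode s) = s.
Proof. apply nth_error_nth, nth_error_scode. Qed.

(* Tape halves are written in base [nS + 1] with digits [1 .. nS], so the
   empty tape is [0] and a nonempty one has a nonzero last digit. *)
Definition base := S nS.

Fixpoint tape_code (l : list (Sigma M)) : nat :=
  match l with [] => 0 | s :: l' => tape_code l' * base + S (scode s) end.

Lemma tape_code_cons s l :
  tape_code (s :: l) mod base = S (scode s) /\ tape_code (s :: l) / base = tape_code l.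
Proof. apply div_mod_digits. pose proof (scode_lt s). unfold base. lia. Qed.

Definition conf_code (C : config M) : nat :=
  pairn (tape_code (cleft C))
        ((tape_code (cright C) * nS + scode (ccur C)) * nQ + qcode (cstate C)).

Definition code_left n := fstn n.
Definition code_state n := sndn n mod nQ.
Definition code_cur n := (sndn n / nQ) mod nS.
Definition code_right n := sndn n / nQ / nS.

Lemma conf_code_fields C :
  code_left (conf_code C) = tape_code (cleft C) /\ code_state (conf_code C) = qcode (cstate C) /\
  code_cur (conf_code C) = scode (ccur C) /\ code_right (conf_code C) = tape_code (cright C).
Proof.
  unfold code_left, code_state, code_cur, code_right, conf_code.
  rewrite fstn_pairn, sndn_pairn.
  destruct (div_mod_digits (tape_code (cright C) * nS + scode (ccur C)) (qcode (cstate C)) nQ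
              (qcode_lt _)) as [-> ->].
  destruct (div_mod_digits (tape_code (cright C)) (scode (ccur C)) nS (scode_lt _)) as [-> ->].
  auto.
Qed.

Definition move_code (m : move) : nat := match m with mL => 0 | mS => 1 | mR => 2 end.
Definition action_code (t : Q M * Sigma M * move) : nat :=
  let '(q', a', m) := t in (qcode q' * nS + scode a') * 3 + move_code m.
Definition deltab (b : bool) := if b then delta1 M else delta0 M.

(* Entry [qcode q * nS + scode a] of [delta_table b] codes [deltab b q a]. *)
Definition delta_table (b : bool) : list nat :=
  map (fun j => action_code (deltab b (qdecode (j / nS)) (sdecode (j mod nS))))
      (seq 0 (nQ * nS)).

Lemma nth_delta_table b q a :
  nth (qcode q * nS + scode a) (delta_table b) 0 = action_code (deltab b q a).
Proof.
  pose proof (qcode_lt q). pose proof (scode_lt a).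
  unfold delta_table. rewrite nth_map_seq by nia.
  destruct (div_mod_digits (qcode q) (scode a) nS (scode_lt a)) as [-> ->].
  rewrite qdecode_qcode, sdecode_scode. auto.
Qed.

Definition step_code (bn n : nat) : nat :=
  let L := code_left n in let q := code_state n in
  let a := code_cur n in let R := code_right n in
  let e := ifz (nth (q * nS + a) (delta_table false) 0)
               (nth (q * nS + a) (delta_table true) 0) bn in
  let m := e mod 3 in let a' := e / 3 mod nS in let q' := e / 3 / nS in
  ifz (ifz (pairn 0 (((R * base + S a') * nS + scode (blank M)) * nQ + q'))
           (pairn (L / base) (((R * base + S a') * nS + Nat.pred (L mod base)) * nQ + q')) L)
      (ifz (pairn L ((R * nS + a') * nQ + q'))
           (ifz (pairn (L * base + S a') ((0 * nS + scode (blank M)) * nQ + q'))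
                (pairn (L * base + S a') ((R / base * nS + Nat.pred (R mod base)) * nQ + q')) R)
           (Nat.pred m)) m.

Lemma step_code_conf_code b C : step_code (Nat.b2n b) (conf_code C) = conf_code (step b C).
Proof.
  destruct (conf_code_fields C) as [HL [Hq [Ha HR]]].
  unfold step_code. cbv zeta. rewrite HL, Hq, Ha, HR.
  assert (He : ifz (nth (qcode (cstate C) * nS + scode (ccur C)) (delta_table false) 0)
        (nth (qcode (cstate C) * nS + scode (ccur C)) (delta_table true) 0) (Nat.b2n b) =
        action_code (deltab b (cstate C) (ccur C)))
    by (destruct b; apply nth_delta_table).
  rewrite He. unfold step. fold (deltab b).
  destruct (deltab b (cstate C) (ccur C)) as [[q' a'] m]. simpl action_code.
  assert (Hm : move_code m < 3) by (destruct m; simpl; lia).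
  destruct (div_mod_digits (qcode q' * nS + scode a') (move_code m) 3 Hm) as [-> ->].
  destruct (div_mod_digits (qcode q') (scode a') nS (scode_lt _)) as [-> ->].
  destruct C as [l c r q]; cbn [cleft cright ccur cstate] in *.
  destruct m; cbn [move_code ifz Nat.pred].
  - destruct l as [|s l]; [reflexivity|].
    destruct (tape_code_cons s l) as [-> ->]. cbn [tape_code].
    replace (tape_code l * base + S (scode s))
      with (S (tape_code l * base + scode s)) by lia. reflexivity.
  - reflexivity.
  - destruct r as [|s r]; [reflexivity|].
    destruct (tape_code_cons s r) as [-> ->]. cbn [tape_code].
    replace (tape_code r * base + S (scode s))
      with (S (tape_code r * base + scode s)) by lia. reflexivity.
Qed.

Definition final_table : list nat :=
  map (fun i => if final M (qdecode i) then 1 else 0) (seq 0 nQ).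

Definition final_code (n : nat) : nat :=
  ifz 0 (ifz 1 0 (code_right n)) (nth (code_state n) final_table 0).

Lemma final_code_conf_code C : final_code (conf_code C) = if isFinal C then 1 else 0.
Proof.
  destruct (conf_code_fields C) as [_ [Hq [_ HR]]]. unfold final_code. rewrite Hq, HR.
  unfold final_table. rewrite nth_map_seq by apply qcode_lt. rewrite qdecode_qcode.
  unfold isFinal. destruct (final M (cstate C)); [|reflexivity].
  destruct (cright C) as [|s l]; [reflexivity|]. cbn [tape_code andb].
  replace (tape_code l * base + S (scode s)) with (S (tape_code l * base + scode s)) by lia.
  reflexivity.
Qed.

Definition opt_code (o : option (config M)) : nat :=
  match o with None => 0 | Some C => S (conf_code C) end.

Definition run_step_code (bn s : nat) : nat :=
  ifz 0 (ifz (S (step_code bn (Nat.pred s))) 0 (final_code (Nat.pred s))) s.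

Definition run_code (b : list bool) (s : nat) : nat :=
  fold_left (fun s c => run_step_code (Nat.b2n c) s) b s.

Lemma run_code_0 b : run_code b 0 = 0.
Proof. induction b; simpl; auto. Qed.

Lemma run_code_opt_code C b : opt_code (run C b) = run_code b (S (conf_code C)).
Proof.
  revert C; induction b as [|c b IH]; intros C; [reflexivity|].
  change (run_code (c :: b) (S (conf_code C)))
    with (run_code b (run_step_code (Nat.b2n c) (S (conf_code C)))).
  unfold run_step_code. cbn [ifz Nat.pred run].
  rewrite final_code_conf_code, step_code_conf_code.
  destruct (isFinal C); cbn [ifz]; auto using run_code_0.
Qed.

Definition bitn (m i : nat) : nat := m / 2 ^ i mod 2.

Lemma bitn_b2n m i : bitn m i = Nat.b2n (Nat.testbit m i).
Proof. unfold bitn. rewrite Nat.testbit_spec'. auto. Qed.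

Definition bit_scode (bn : nat) : nat := ifz (scode (sym0 M)) (scode (sym1 M)) bn.

(* The tape code of the symbols for bits [t-1, ..., 0] of [m], the most
   significant one first. *)
Fixpoint bits_tape_code (m t : nat) : nat :=
  match t with O => 0 | S t' => bits_tape_code m t' * base + S (bit_scode (bitn m t')) end.

Lemma tape_code_bits (v : list bool) m :
  (forall i, i < length v -> nth i v false = Nat.testbit m (length v - 1 - i)) ->
  tape_code (map (bit2sym M) v) = bits_tape_code m (length v).
Proof.
  induction v as [|c v IH]; intros H; simpl; auto.
  rewrite IH.
  - f_equal. rewrite bitn_b2n. specialize (H 0 ltac:(simpl; lia)). simpl in H.
    rewrite !Nat.sub_0_r in H. rewrite <- H. destruct c; reflexivity.
  - intros i Hi. specialize (H (S i) ltac:(simpl; lia)). simpl in H. rewrite H. f_equal. lia.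
Qed.

(* [S a] is the binary numeral [1 :: bar a]: the input [bar a] is read
   off its bits below the leading one. *)
Definition init_code (a : nat) : nat :=
  let t := Nat.pred (Nat.log2 (S a)) in
  ifz (pairn 0 (scode (blank M) * nQ + qcode (qs M)))
      (pairn 0 ((bits_tape_code (S a) t * nS + bit_scode (bitn (S a) t)) * nQ + qcode (qs M)))
      (Nat.log2 (S a)).

Lemma init_code_conf_code a : init_code a = conf_code (initConf M (bar a)).
Proof.
  unfold init_code, initConf. rewrite <- bar_length.
  pose proof (bar_nth a) as Hn. pose proof (bar_length a) as Hl.
  destruct (bar a) as [|c v]; [reflexivity|]. simpl in Hl |- *.
  assert (Hr : tape_code (map (bit2sym M) v) = bits_tape_code (S a) (length v)).
  { apply tape_code_bits. intros i Hi. specialize (Hn (S i) ltac:(simpl; lia)).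
    simpl in Hn. rewrite Hn. f_equal. lia. }
  assert (Hc : scode (bit2sym M c) = bit_scode (bitn (S a) (length v))).
  { rewrite bitn_b2n. specialize (Hn 0 ltac:(simpl; lia)). simpl in Hn.
    rewrite <- Hl in Hn. replace (S (length v) - 1 - 0) with (length v) in Hn by lia.
    rewrite <- Hn. destruct c; reflexivity. }
  unfold conf_code; simpl. rewrite Hr, Hc. reflexivity.
Qed.

(* The code of the label of the node given by the first [t] bits of [bar b]
   in [CT_M(a)]. *)
Fixpoint label_code (a b t : nat) : nat :=
  match t with
  | O => S (init_code a)
  | S t' => run_step_code (bitn (S b) (Nat.log2 (S b) - 1 - t')) (label_code a b t')
  end.

Lemma firstn_S_nth {A} (l : list A) t d :
  t < length l -> firstn (S t) l = firstn t l ++ [nth t l d].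
Proof.
  revert t; induction l; intros t H; simpl in *; [lia|].
  destruct t; simpl; auto. rewrite IHl by lia. auto.
Qed.

Lemma label_code_run_code a b t : t <= length (bar b) ->
  label_code a b t = run_code (firstn t (bar b)) (S (init_code a)).
Proof.
  induction t; intros H; [reflexivity|].
  cbn [label_code]. rewrite IHt, (firstn_S_nth _ t false) by lia.
  unfold run_code. rewrite fold_left_app. simpl.
  rewrite bar_nth, bitn_b2n by lia. auto.
Qed.

Definition leaf_code (a b : nat) : nat :=
  let s := label_code a b (Nat.log2 (S b)) in ifz 0 (final_code (Nat.pred s)) s.

Lemma leaf_code_isLeaf a b : leaf_code a b = if isLeaf M a b then 1 else 0.
Proof.
  unfold leaf_code, isLeaf, label.
  rewrite label_code_run_code by (rewrite bar_length; auto).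
  rewrite <- bar_length, firstn_all, init_code_conf_code, <- run_code_opt_code.
  destruct (run (initConf M (bar a)) (bar b)); simpl; auto using final_code_conf_code.
Qed.

Lemma PRdet_step_code k h1 h2 :
  PRdet k h1 -> PRdet k h2 -> PRdet k (fun x => step_code (h1 x) (h2 x)).
Proof.
  intros H1 H2. apply (PRdet_comp2 k step_code); auto.
  unfold step_code, code_left, code_state, code_cur, code_right. cbv beta zeta.
  repeat (first [apply PRdet_pairn | apply PRdet_fstn | apply PRdet_sndn | prdet_step]).
Qed.

Lemma PRdet_final_code k h : PRdet k h -> PRdet k (fun x => final_code (h x)).
Proof.
  apply (PRdet_comp1 k final_code).
  unfold final_code, code_state, code_right.
  repeat (first [apply PRdet_sndn | prdet_step]).
Qed.

Lemma PRdet_run_step_code k h1 h2 :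
  PRdet k h1 -> PRdet k h2 -> PRdet k (fun x => run_step_code (h1 x) (h2 x)).
Proof.
  intros H1 H2. apply (PRdet_comp2 k run_step_code); auto.
  unfold run_step_code. repeat (first [apply PRdet_step_code | apply PRdet_final_code | prdet_step]).
Qed.

Lemma PRdet_bitn k h1 h2 : PRdet k h1 -> PRdet k h2 -> PRdet k (fun x => bitn (h1 x) (h2 x)).
Proof. intros. apply (PRdet_comp2 k bitn); auto. unfold bitn. prdet. Qed.

Lemma PRdet_bits_tape_code k h1 h2 :
  PRdet k h1 -> PRdet k h2 -> PRdet k (fun x => bits_tape_code (h1 x) (h2 x)).
Proof.
  intros H1 H2. apply (PRdet_comp2 k bits_tape_code); auto.
  apply (PRdet_rec2 bits_tape_code (fun _ => 0)
           (fun m t acc => acc * base + S (bit_scode (bitn m t)))); auto.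
  - apply PRdet_const; lia.
  - unfold bit_scode. repeat (first [apply PRdet_bitn | prdet_step]).
Qed.

Lemma PRdet_init_code k h : PRdet k h -> PRdet k (fun x => init_code (h x)).
Proof.
  apply (PRdet_comp1 k init_code). unfold init_code, bit_scode. cbv zeta.
  repeat (first [apply PRdet_pairn | apply PRdet_bits_tape_code | apply PRdet_bitn | prdet_step]).
Qed.

Lemma PRdet_leaf_code k h1 h2 :
  PRdet k h1 -> PRdet k h2 -> PRdet k (fun x => leaf_code (h1 x) (h2 x)).
Proof.
  intros H1 H2. apply (PRdet_comp2 k leaf_code); auto.
  assert (Hlabel : PRdet 3 (fun l => label_code (l@0) (l@1) (l@2))).
  { apply (PRdet_rec3 label_code (fun a _ => S (init_code a))
      (fun _ b t acc => run_step_code (bitn (S b) (Nat.log2 (S b) - 1 - t)) acc)); auto.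
    - repeat (first [apply PRdet_init_code | prdet_step]).
    - repeat (first [apply PRdet_run_step_code | apply PRdet_bitn | prdet_step]). }
  unfold leaf_code.
  repeat (first [apply PRdet_final_code | apply (PRdet_comp3 2 label_code) | prdet_step]); auto.
Qed.

End Coding.

(** * Kraft's inequality for the leaves of the computation tree *)

Open Scope R_scope.

Definition weight (P : list bool -> bool) (b : list bool) : R :=
  if P b then / 2 ^ length b else 0.

Definition prefix_free (P : list bool -> bool) :=
  forall b c, P b = true -> P (b ++ c) = true -> c = [].

Lemma weight_nil_le P : weight P [] <= 1.
Proof. unfold weight. destruct (P []); simpl; lra. Qed.

Lemma lsumR_weight_nil P S : NoDup S -> (forall b, In b S -> b <> [] -> weight P b = 0) ->
  lsumR (map (weight P) S) =
  if in_dec (list_eq_dec Bool.bool_dec) [] S then weight P [] else 0.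
Proof.
  induction S as [|b S IH]; intros HND H; [reflexivity|].
  apply NoDup_cons_iff in HND as [Hb HND].
  change (lsumR (map (weight P) (b :: S))) with (weight P b + lsumR (map (weight P) S)).
  rewrite IH by auto with datatypes.
  destruct b as [|c b].
  - destruct (in_dec _ [] S); [contradiction|].
    destruct (in_dec _ [] ([] :: S)) as [|Hn]; [lra|]. exfalso. apply Hn. left. auto.
  - rewrite H by (auto with datatypes; discriminate).
    destruct (in_dec _ [] S) as [Hin|Hnin];
      destruct (in_dec _ [] ((c :: b) :: S)) as [Hin'|Hnin']; try lra.
    + exfalso. auto with datatypes.
    + destruct Hin' as [E|]; [discriminate|contradiction].
Qed.

Lemma weight_cons P c b : weight P (c :: b) = / 2 * weight (fun b => P (c :: b)) b.
Proof. unfold weight. simpl. destruct (P (c :: b)); [apply Rinv_mult | lra]. Qed.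

Definition branch (d : bool) (S : list (list bool)) : list (list bool) :=
  flat_map (fun b => match b with [] => [] | c :: b' => if Bool.eqb c d then [b'] else [] end) S.

Lemma In_branch d S b : In b (branch d S) -> In (d :: b) S.
Proof.
  unfold branch. intros H. apply in_flat_map in H as [[|c b'] [Hb0 Hin]]; [destruct Hin|].
  destruct (Bool.eqb c d) eqn:E; [|destruct Hin].
  destruct Hin as [<-|[]]. apply Bool.eqb_prop in E. subst. auto.
Qed.

Lemma NoDup_branch d S : NoDup S -> NoDup (branch d S).
Proof.
  induction S as [|b S IH]; intros HND; simpl; [constructor|].
  apply NoDup_cons_iff in HND as [Hb HND].
  destruct b as [|c b']; simpl; auto.
  destruct (Bool.eqb c d) eqn:E; simpl; auto.
  constructor; auto. intros Hin. apply In_branch in Hin. apply Bool.eqb_prop in E. subst. auto.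
Qed.

Lemma lsumR_weight_branch P S : P [] = false ->
  lsumR (map (weight P) S) =
  / 2 * lsumR (map (weight (fun b => P (false :: b))) (branch false S)) +
  / 2 * lsumR (map (weight (fun b => P (true :: b))) (branch true S)).
Proof.
  intros H0. induction S as [|b S IH]; [unfold lsumR; simpl; lra|].
  unfold branch in *. simpl flat_map. rewrite !map_app, !lsumR_app.
  change (lsumR (map (weight P) (b :: S))) with (weight P b + lsumR (map (weight P) S)).
  rewrite IH. destruct b as [|c b'].
  - unfold weight at 1. rewrite H0. unfold lsumR; simpl. lra.
  - rewrite weight_cons. destruct c; simpl; unfold lsumR; simpl; lra.
Qed.

Lemma kraft_bounded m : forall P S, prefix_free P -> NoDup S ->
  (forall b, In b S -> (length b <= m)%nat) -> lsumR (map (weight P) S) <= 1.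
Proof.
  induction m as [|m IH]; intros P S Hpf HND Hlen.
  - rewrite lsumR_weight_nil; auto.
    + destruct (in_dec _ _ _); auto using weight_nil_le. lra.
    + intros [|c b] Hb Hne; [congruence|]. specialize (Hlen _ Hb). simpl in Hlen. lia.
  - destruct (P []) eqn:Enil.
    + rewrite lsumR_weight_nil; auto.
      * destruct (in_dec _ _ _); auto using weight_nil_le. lra.
      * intros b Hb Hne. unfold weight. destruct (P b) eqn:Eb; auto.
        exfalso. apply Hne, (Hpf [] b); auto.
    + rewrite (lsumR_weight_branch P S Enil).
      assert (Hd : forall d, lsumR (map (weight (fun b => P (d :: b))) (branch d S)) <= 1).
      { intros d. apply IH.
        - intros b c H1 H2. apply (Hpf (d :: b) c); auto.
        - apply NoDup_branch; auto.
        - intros b Hb. apply In_branch in Hb. specialize (Hlen _ Hb). simpl in Hlen. lia. }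
      pose proof (Hd false). pose proof (Hd true). lra.
Qed.

Lemma kraft P S : prefix_free P -> NoDup S -> lsumR (map (weight P) S) <= 1.
Proof.
  intros Hpf HND. apply (kraft_bounded (list_max (map (@length bool) S))); auto.
  intros b Hb. assert (Hall := proj1 (list_max_le (map (@length bool) S) _) (le_n _)).
  rewrite Forall_forall in Hall. apply Hall, in_map, Hb.
Qed.

Lemma run_app {M : PTM} (C : config M) b c :
  run C (b ++ c) = match run C b with Some C' => run C' c | None => None end.
Proof. revert C; induction b; intros C; simpl; auto. destruct (isFinal C); auto. Qed.

Definition is_leaf_word (M : PTM) (x : nat) (b : list bool) : bool :=
  match label M x b with Some C => isFinal C | None => false end.

Lemma prefix_free_leaves M x : prefix_free (is_leaf_word M x).
Proof.
  intros b c H1 H2. unfold is_leaf_word, label in *. rewrite run_app in H2.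
  destruct (run (initConf M (bar x)) b) as [C|]; [|discriminate].
  destruct c as [|d c]; auto. simpl in H2. rewrite H1 in H2. discriminate.
Qed.

Lemma fsum_CF M x n : fsum n (CF M [x]) = lsumR (map (weight (is_leaf_word M x)) (map bar (seq 0 n))).
Proof.
  induction n; [reflexivity|].
  rewrite seq_S, !map_app, lsumR_app, <- IHn. simpl.
  unfold CF, weight, isLeaf, is_leaf_word, PT. simpl.
  destruct (label M x (bar n)); unfold lsumR; simpl; lra.
Qed.

Lemma fsum_CF_le_1 M x n : fsum n (CF M [x]) <= 1.
Proof.
  rewrite fsum_CF. apply kraft; auto using prefix_free_leaves.
  apply Injective_map_NoDup; auto using bar_inj, seq_NoDup.
Qed.

Lemma PT_pos M x y : 0 < PT M x y.
Proof. apply Rinv_0_lt_compat, pow_lt. lra. Qed.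

Lemma P1prod_CF M x n : P1prod M x n = 1 - fsum n (CF M [x]).
Proof.
  induction n; simpl; [lra|].
  rewrite IHn. unfold PT1_from.
  pose proof (fsum_CF_le_1 M x (S n)) as K. simpl in K. unfold CF in *. simpl in *.
  destruct (isLeaf M x n); [|lra].
  pose proof (PT_pos M x n). field. lra.
Qed.

Lemma PT_le_P1prod M x y : isLeaf M x y = true -> PT M x y <= P1prod M x y.
Proof.
  intros H. rewrite P1prod_CF. pose proof (fsum_CF_le_1 M x (S y)) as K. simpl in K.
  unfold CF at 2 in K. simpl in K. rewrite H in K. lra.
Qed.

Lemma PT1_nonneg M x y : 0 <= PT1 M x y.
Proof.
  unfold PT1, PT1_from. destruct (isLeaf M x y) eqn:E; [|lra].
  pose proof (PT_le_P1prod M x y E). pose proof (PT_pos M x y).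
  assert (PT M x y / P1prod M x y <= 1); [|lra].
  unfold Rdiv. apply (Rmult_le_reg_r (P1prod M x y)); [lra|].
  rewrite Rmult_assoc, Rinv_l by lra. lra.
Qed.

Lemma IsMu_PTC M : IsMu 1 (PTC M) (CF M).
Proof.
  intros [|a [|]] Hx y; try discriminate. exists (fun z => PT1 M a z). split.
  - intros z. apply (SumN_single (fun j => PTC M [a; z] (S j)) 0%nat).
    + intros [|[|j]] Hj; [lia|reflexivity|reflexivity].
    + apply PT1_nonneg.
  - assert (Hprod : fprod y (fun z => PT1 M a z) = P1prod M a y)
      by (induction y; simpl; auto; rewrite IHy; auto).
    rewrite Hprod. unfold CF, PTC, PT0, PT0_from. simpl.
    destruct (isLeaf M a y) eqn:E; [|lra].
    pose proof (PT_le_P1prod M a y E). pose proof (PT_pos M a y).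
    field. lra.
Qed.

(** * [PT^0] as the reciprocal of a primitive recursive integer *)

Definition binary_digit (q k : nat) : nat := (2 ^ S k / q mod 2)%nat.

Lemma binary_digit_le q k : (binary_digit q k <= 1)%nat.
Proof. unfold binary_digit. pose proof (Nat.mod_upper_bound (2 ^ S k / q) 2). lia. Qed.

Lemma fsum_binary_digits q N : (2 <= q)%nat ->
  fsum N (fun k => (/ 2) ^ S k * INR (binary_digit q k)) = INR (2 ^ N / q) * (/ 2) ^ N.
Proof.
  intros Hq. induction N.
  - simpl. rewrite Nat.div_small by lia. simpl. lra.
  - assert (Hrec : (2 ^ S N / q = 2 * (2 ^ N / q) + binary_digit q N)%nat).
    { unfold binary_digit. rewrite (Nat.div_mod_eq (2 ^ S N / q) 2) at 1.
      rewrite Nat.Div0.div_div, Nat.pow_succ_r', (Nat.mul_comm q 2),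
        Nat.Div0.div_mul_cancel_l by lia. auto. }
    cbn [fsum]. rewrite IHN, Hrec, plus_INR, mult_INR. simpl INR. simpl pow. field.
Qed.

Lemma binary_digits_approx q N : (2 <= q)%nat ->
  / INR q - (/ 2) ^ N <= fsum N (fun k => (/ 2) ^ S k * INR (binary_digit q k)) <= / INR q.
Proof.
  intros Hq. rewrite fsum_binary_digits by auto.
  pose proof (Nat.div_mod_eq (2 ^ N) q) as E.
  pose proof (Nat.mod_upper_bound (2 ^ N) q ltac:(lia)) as U.
  set (f := (2 ^ N / q)%nat) in *. set (r := ((2 ^ N) mod q)%nat) in *.
  assert (E' : 2 ^ N = INR q * INR f + INR r)
    by (rewrite <- (pow_INR 2), E, plus_INR, mult_INR; simpl; lra).
  assert (Ur : INR r + 1 <= INR q) by (rewrite <- S_INR; apply le_INR; lia).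
  assert (Hq' : 0 < INR q) by (apply lt_0_INR; lia).
  assert (Hr : 0 <= INR r) by apply pos_INR.
  assert (P : 0 < 2 ^ N) by (apply pow_lt; lra).
  rewrite pow_inv. split.
  - apply (Rmult_le_reg_l (INR q * 2 ^ N)); [nra|].
    replace (INR q * 2 ^ N * (INR f * / 2 ^ N)) with (INR q * INR f) by (field; lra).
    replace (INR q * 2 ^ N * (/ INR q - / 2 ^ N)) with (2 ^ N - INR q) by (field; lra). lra.
  - apply (Rmult_le_reg_l (INR q * 2 ^ N)); [nra|].
    replace (INR q * 2 ^ N * (INR f * / 2 ^ N)) with (INR q * INR f) by (field; lra).
    replace (INR q * 2 ^ N * / INR q) with (2 ^ N) by (field; lra). lra.
Qed.

(* The geometric distribution [P(n) = 2^-(n+1)]: the index of the first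
   head in a sequence of fair coin flips. *)
Lemma PR_geometric k : (0 < k)%nat -> PR k (fun _ n => (/ 2) ^ S n).
Proof.
  intros Hk.
  set (coin := fun (_ : list nat) y => if Nat.eqb y 0 then / 2 else if Nat.eqb y 1 then / 2 else 0).
  assert (Hcoin : PR (S k) coin).
  { set (rand := fun l y => if Nat.eqb y (l@0) then / 2 else if Nat.eqb y (S (l@0)) then / 2 else 0).
    apply (PR_ext _ (fun x y => rand (map (fun H => H x) [fun _ => 0%nat]) y)); [|reflexivity].
    apply PR_comp_det.
    - apply PR_rand. reflexivity.
    - intros z y. unfold rand. destruct (Nat.eqb _ _); [lra|]. destruct (Nat.eqb _ _); lra.
    - intros H [<-|[]]. apply PRdet_const. lia. }
  apply (PR_mu k coin _ Hcoin). intros x Hx y. exists (fun _ => / 2). split.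
  - intros z. apply (SumN_single (fun j => coin (x ++ [z]) (S j)) 0%nat).
    + intros [|[|j]] Hj; [lia|reflexivity|reflexivity].
    + unfold coin; simpl. lra.
  - rewrite fprod_const. unfold coin. simpl. auto.
Qed.

Lemma SumN_geometric_bit (o : nat -> nat) p w :
  (forall k, (o k <= 1)%nat) ->
  (forall N, p - (/ 2) ^ N <= fsum N (fun k => (/ 2) ^ S k * INR (1 - o k)) <= p) ->
  SumN (fun k => (/ 2) ^ S k * (if Nat.eqb w (o k) then 1 else 0))
       (match w with 0%nat => p | 1%nat => 1 - p | _ => 0 end).
Proof.
  intros Ho Hp. apply SumN_squeeze; intros N; specialize (Hp N);
    pose proof (geometric_fsum N) as G; pose proof (pow_le (/ 2) N ltac:(lra));
    destruct w as [|[|w]].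
  all: try (rewrite fsum_zero; [lra|]; intros k; specialize (Ho k);
            destruct (o k) as [|[|]]; simpl; lia || lra).
  all: try (rewrite (fsum_ext _ _ (fun k => (/ 2) ^ S k * INR (1 - o k))); [lra|];
            intros k; specialize (Ho k); destruct (o k) as [|[|]]; simpl; lia || lra).
  all: rewrite (fsum_ext _ _ (fun k => (/ 2) ^ S k - (/ 2) ^ S k * INR (1 - o k))),
         fsum_minus; [lra|];
       intros k; specialize (Ho k); destruct (o k) as [|[|]]; simpl; lia || lra.
Qed.

Section Denominator.
Variable M : PTM.

(* [2^|bar b|] times the weight of the leaves among the nodes [0 .. n-1]. *)
Fixpoint scaled_leaf_sum (a b n : nat) : nat :=
  match n with
  | O => O
  | S n' => (scaled_leaf_sum a b n' + leaf_code M a n' * 2 ^ (Nat.log2 (S b) - Nat.log2 (S n')))%nat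
  end.

Definition denom (a b : nat) : nat := (2 ^ Nat.log2 (S b) - scaled_leaf_sum a b b)%nat.

Lemma INR_scaled_leaf_sum a b n : (n <= b)%nat ->
  INR (scaled_leaf_sum a b n) = 2 ^ Nat.log2 (S b) * fsum n (CF M [a]).
Proof.
  induction n; intros Hn; simpl; [lra|].
  rewrite plus_INR, IHn, mult_INR, leaf_code_isLeaf, pow_INR by lia.
  unfold CF, PT. simpl nth. rewrite bar_length.
  assert (Hle : (Nat.log2 (S n) <= Nat.log2 (S b))%nat) by (apply Nat.log2_le_mono; lia).
  replace (2 ^ Nat.log2 (S b)) with (2 ^ (Nat.log2 (S b) - Nat.log2 (S n)) * 2 ^ Nat.log2 (S n))
    by (rewrite <- pow_add; f_equal; lia).
  destruct (isLeaf M a n); simpl; [|lra].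
  replace (1 + 1) with 2 by lra. field. apply pow_nonzero. lra.
Qed.

Lemma INR_denom a b : INR (denom a b) = 2 ^ Nat.log2 (S b) * P1prod M a b.
Proof.
  unfold denom. rewrite P1prod_CF.
  pose proof (INR_scaled_leaf_sum a b b (le_n _)) as E.
  pose proof (fsum_CF_le_1 M a b) as K.
  assert (Hp : 0 < 2 ^ Nat.log2 (S b)) by (apply pow_lt; lra).
  assert (H2 : INR 2 = 2) by (simpl; lra).
  rewrite minus_INR, E, pow_INR, H2; [ring|].
  apply INR_le. rewrite E, pow_INR, H2. nra.
Qed.

Lemma PT0_denom a b : isLeaf M a b = true ->
  PT0 M a b = / INR (denom a b) /\ (1 <= denom a b)%nat.
Proof.
  intros HL. pose proof (PT_le_P1prod M a b HL) as H1. pose proof (PT_pos M a b) as H2.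
  unfold PT0, PT0_from, PT in *. rewrite HL. rewrite bar_length in *.
  assert (Hp : 0 < 2 ^ Nat.log2 (S b)) by (apply pow_lt; lra).
  rewrite INR_denom. split.
  - field. split; lra.
  - apply INR_le. rewrite INR_denom. simpl INR.
    apply (Rmult_le_reg_r (/ 2 ^ Nat.log2 (S b))); [apply Rinv_0_lt_compat; auto|].
    rewrite Rmult_1_l, Rmult_comm, <- Rmult_assoc, Rinv_l by lra. lra.
Qed.

(* Outcome of [PTC_M(a, b)] when the geometric draw is [k]: the digit
   [k+1] of [1 / denom a b] decides, except when [denom a b = 1], where
   [1 = 0.111...] in binary. *)
Definition ptc_outcome (a b k : nat) : nat :=
  ifz 1 (ifz 0 (1 - binary_digit (denom a b) k) (denom a b - 1)) (leaf_code M a b).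

Lemma PRdet_ptc_outcome : PRdet 3 (fun l => ptc_outcome (l@1) (l@2) (l@0)).
Proof.
  assert (Hsum : forall h1 h2 h3, PRdet 3 h1 -> PRdet 3 h2 -> PRdet 3 h3 ->
            PRdet 3 (fun x => scaled_leaf_sum (h1 x) (h2 x) (h3 x))).
  { intros. apply (PRdet_comp3 3 scaled_leaf_sum); auto.
    apply (PRdet_rec3 scaled_leaf_sum (fun _ _ => 0%nat)
      (fun a b n acc => acc + leaf_code M a n * 2 ^ (Nat.log2 (S b) - Nat.log2 (S n)))%nat); auto.
    - apply PRdet_const; lia.
    - repeat (first [apply PRdet_leaf_code | prdet_step]). }
  unfold ptc_outcome, denom, binary_digit.
  repeat (first [apply PRdet_leaf_code | apply Hsum | prdet_step]).
Qed.

Lemma PTC_bit a b w :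
  PTC M [a; b] w = match w with 0%nat => PT0 M a b | 1%nat => 1 - PT0 M a b | _ => 0 end.
Proof.
  unfold PTC, PT1, PT0, PT1_from, PT0_from. simpl.
  destruct w as [|[|]]; auto. destruct (isLeaf M a b); lra.
Qed.

Lemma ptc_outcome_le_1 a b k : (ptc_outcome a b k <= 1)%nat.
Proof. unfold ptc_outcome, ifz. destruct (leaf_code M a b), (denom a b - 1)%nat; lia. Qed.

Lemma ptc_outcome_approx a b N :
  PT0 M a b - (/ 2) ^ N <= fsum N (fun k => (/ 2) ^ S k * INR (1 - ptc_outcome a b k))
  <= PT0 M a b.
Proof.
  pose proof (pow_le (/ 2) N ltac:(lra)).
  unfold ptc_outcome. rewrite leaf_code_isLeaf.
  destruct (isLeaf M a b) eqn:HL; cbn [ifz].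
  - destruct (PT0_denom a b HL) as [-> Hq].
    destruct (denom a b) as [|[|q]]; [lia| |]; cbn [ifz Nat.sub].
    + rewrite (fsum_ext _ _ (fun k => (/ 2) ^ S k)) by (intros; simpl; ring).
      rewrite geometric_fsum. simpl. lra.
    + rewrite (fsum_ext _ _ (fun k => (/ 2) ^ S k * INR (binary_digit (S (S q)) k))).
      * apply binary_digits_approx. lia.
      * intros k. pose proof (binary_digit_le (S (S q)) k).
        destruct (binary_digit (S (S q)) k) as [|[|]]; auto; lia.
  - unfold PT0, PT0_from. rewrite HL, fsum_zero; [lra|]. intros k. simpl. lra.
Qed.

Lemma PR_PTC : PR 2 (PTC M).
Proof.
  assert (Hgeo : forall (x : list nat) n, 0 <= (/ 2) ^ S n) by (intros; apply pow_le; lra).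
  apply (PR_bind 2 _ _ _ (PR_geometric 2 ltac:(lia)) Hgeo PRdet_ptc_outcome).
  intros [|a [|b [|]]] Hx w; try discriminate.
  rewrite PTC_bit. unfold dirac. simpl nth.
  apply SumN_geometric_bit; auto using ptc_outcome_le_1, ptc_outcome_approx.
Qed.
End Denominator.

Theorem mainTheorem11 (M : PTM) :
  IsMu 1 (PTC M) (CF M) /\ PR 1 (CF M).
Proof.
  split.
  - apply IsMu_PTC.
  - exact (PR_mu 1 (PTC M) (CF M) (PR_PTC M) (IsMu_PTC M)).
Qed.
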